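(* Let $X=(X,d,\mu)$ be a metric measure space with $\mu$ uniformly locally doubling. If a measure $\mathfrak m$ on $X$ is weakly noncollapsed, then $\mathfrak m$ has the uniformly weak asymptotically doubling property. Furthermore, for every $c>1$ and every $Q\in\operatorname{Q}_\mu(1)$, $\underline{C}_{\mathfrak m}(c)\le 2^{([c]+1)Q}$, where $[c]=\max\{k\in\mathbb Z:k\le c\}$.
   Context: A metric measure space is a triple $X=(X,d,\mu)$ with $(X,d)$ a complete separable metric space and $\mu$ a Borel regular measure with $0<\mu(B)<\infty$ for every ball $B$ and $\operatorname{supp}\mu=X$. All balls are closed: $B_r(x)=\{y:d(x,y)\le r\}$. A measure on $X$ means a nonzero Borel regular locally finite (outer) measure. $\mu$ is uniformly locally doubling if for every $R>0$, $\sup_{r\in(0,R]}\sup_{x}\mu(B_{2r}(x))/\mu(B_r(x))<\infty$. A measure $\mathfrak m$ is weakly noncollapsed if $\inf_{x\in\operatorname{supp}\mathfrak m}\liminf_{r\to0}\mathfrak m(B_r(x))/\mu(B_r(x))>0$. $\mathfrak m$ has the uniformly weak asymptotically doubling property if for every $c>0$, $\underline C_{\mathfrak m}(c):=\lim_{R\to0^+}\sup_{x\in\operatorname{supp}\mathfrak m}\inf_{r\in(0,R]}\mathfrak m(B_{cr}(x))/\mathfrak m(B_r(x))<\infty$. $\mu$ has relative lower volume decay of order $Q>0$ up to scale $R$ if there is $C(Q,R)>0$ such that $(r(B')/r(B))^Q\le C(Q,R)\mu(B')/\mu(B)$ for all closed balls $B'\subset B$ with $r(B)<R$; $\operatorname{Q}_\mu(R)$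 denotes the set of all such $Q$. *)

From HB Require Import structures.
From mathcomp Require Import all_boot all_order all_algebra.
From mathcomp Require Import all_classical all_reals all_analysis.
Set Implicit Arguments. Unset Strict Implicit. Unset Printing Implicit Defensive.
Import Order.TTheory GRing.Theory Num.Theory.
Local Open Scope classical_set_scope.
Local Open Scope ring_scope.

Section MMS.
Variables (R : realType) (X : Type) (d : X -> X -> R).

Definition is_metric : Prop :=
  [/\ forall x y, 0 <= d x y,
      forall x y, d x y = 0 <-> x = y,
      forall x y, d x y = d y x &
      forall x y z, d x z <= d x y + d y z].

Definition d_complete : Prop :=
  forall u : nat -> X,
    (forall e : R, 0 < e -> exists N : nat, forall n m : nat,
        (N <= n)%N -> (N <= m)%N -> d (u n) (u m) < e) ->
    exists l : X, forall e : R, 0 < e -> exists N : nat, forall n : nat,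
        (N <= n)%N -> d (u n) l < e.

Definition d_separable : Prop :=
  exists D : set X, countable D /\
    forall x e, 0 < e -> exists2 y, D y & d x y < e.

Definition cs_metric_space : Prop := [/\ is_metric, d_complete & d_separable].

Definition cball (x : X) (r : R) : set X := [set y | d x y <= r].

Definition d_open (A : set X) : Prop :=
  forall x, A x -> exists2 e : R, 0 < e & [set y | d x y < e] `<=` A.

Definition d_borel (A : set X) : Prop := <<s d_open >> A.

Definition borel_regular (m : set X -> \bar R) : Prop :=
  (forall B, d_borel B -> caratheodory_measurable m B) /\
  (forall A, exists B, [/\ d_borel B, A `<=` B & m B = m A]).

Definition locally_finite (m : set X -> \bar R) : Prop :=
  forall x, exists2 r : R, 0 < r & (m (cball x r) < +oo)%E.

Definition nonzero_measure (m : set X -> \bar R) : Prop :=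
  exists A, m A <> 0%E.

Definition supp (m : set X -> \bar R) : set X :=
  [set x | forall r : R, 0 < r -> (0 < m (cball x r))%E].

Definition is_measure_on (m : {outer_measure set X -> \bar R}) : Prop :=
  [/\ nonzero_measure m, borel_regular m & locally_finite m].

Definition mm_space (mu : {outer_measure set X -> \bar R}) : Prop :=
  [/\ cs_metric_space, borel_regular mu,
      (forall x r, 0 < r -> (0 < mu (cball x r))%E /\ (mu (cball x r) < +oo)%E) &
      supp mu = setT].

(* quotient a/b of extended reals, used only with 0 < b;
   convention: +oo/+oo = +oo, a/+oo = 0 for finite a *)
Definition eratio (a b : \bar R) : \bar R :=
  match b with
  | r%:E => (a * (r^-1)%:E)%E
  | +oo%E => if a is +oo%E then +oo%E else 0%E
  | -oo%E => 0%E
  end.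

Definition unif_loc_doubling (mu : set X -> \bar R) : Prop :=
  forall Rr : R, 0 < Rr -> exists C : R, forall r x, 0 < r -> r <= Rr ->
    (eratio (mu (cball x (2 * r))) (mu (cball x r)) <= C%:E)%E.

Definition liminf0 (f : R -> \bar R) : \bar R :=
  ereal_sup [set ereal_inf (f @` [set r | 0 < r < delta]) | delta in [set delta : R | 0 < delta]].

Definition weakly_noncollapsed (mu m : set X -> \bar R) : Prop :=
  (0 < ereal_inf [set liminf0 (fun r => eratio (m (cball x r)) (mu (cball x r)))
                  | x in supp m])%E.

Definition wad_aux (m : set X -> \bar R) (c Rr : R) : \bar R :=
  ereal_sup [set ereal_inf [set eratio (m (cball x (c * r))) (m (cball x r))
                            | r in [set r : R | 0 < r <= Rr]]
             | x in supp m].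

Definition lowerC (m : set X -> \bar R) (c : R) : \bar R :=
  lim (wad_aux m c Rr @[Rr --> 0^'+]).

Definition unif_weak_asymp_doubling (m : set X -> \bar R) : Prop :=
  forall c : R, 0 < c -> (lowerC m c < +oo)%E.

Definition rel_lower_volume_decay (mu : set X -> \bar R) (Q Rr : R) : Prop :=
  0 < Q /\ exists2 C : R, 0 < C &
    forall (x' x : X) (r' r : R), 0 < r' -> 0 < r -> r < Rr ->
      cball x' r' `<=` cball x r ->
      (r' / r) `^ Q <= C * (fine (mu (cball x' r')) / fine (mu (cball x r))).

Definition Qset (mu : set X -> \bar R) (Rr : R) : set R :=
  [set Q | rel_lower_volume_decay mu Q Rr].

End MMS.

From HB Require Import structures.
From mathcomp Require Import all_boot all_order all_algebra.
From mathcomp Require Import all_classical all_reals all_analysis.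
From mathcomp Require Import lra.
Import Order.TTheory GRing.Theory Num.Theory.
Local Open Scope classical_set_scope.
Local Open Scope ring_scope.
Set Implicit Arguments. Unset Strict Implicit.

(* Fix x in supp m and a dilation c > 1.  Suppose mu loses at most a factor
   A L^-n when the radius of a ball around x shrinks from r to r / c^n
   ("geometric volume decay at rate L").  If m(B_{cr}(x)) > K m(B_r(x)) held
   at all small scales r0 / c^n with K > L, then m(B_{r0/c^n}(x)) would decay
   like K^-n, whereas weak noncollapsing keeps it above a multiple of
   mu(B_{r0/c^n}(x)), which decays at most like L^-n: impossible.  Hence the
   ratio is at most K at arbitrarily small scales, uniformly on supp m, which
   bounds lowerC m c by K ([ratio_bound_of_geometric_decay],
   [lowerC_le_of_ratio_bound]).

   Geometric decay comes from two sources: uniform local doubling gives rate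
   C^k whenever c <= 2^k, proving finiteness of lowerC m c (small c reduce to
   c = 2 by monotonicity); relative lower volume decay of order Q gives rate
   c^Q, and c^Q < 2^{([c]+1)Q} yields the explicit bound. *)

Lemma geometric_squeeze (R : realType) (L K B : R) (g : nat -> R) :
  0 < L -> L < K -> 0 < B ->
  (forall n, B / L ^+ n <= g n) -> ~ (forall n, K * g n.+1 <= g n).
Proof.
move=> L0 LK B0 lower contracting.
have K0 : 0 < K := lt_trans L0 LK.
have decay n : K ^+ n * g n <= g 0.
  elim: n => [|n IH]; first by rewrite expr0 mul1r.
  apply: le_trans IH; rewrite exprSr -mulrA.
  by apply: ler_wpM2l; [rewrite exprn_ge0 // ltW|].
have g00 : 0 < g 0 by apply: lt_le_trans (lower 0); rewrite expr0 divr1.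
have LK1 : `|L / K| < 1 by rewrite ger0_norm ?divr_ge0 ?ltW // ltr_pdivrMr // mul1r.
have [N _ /(_ N (leqnn N)) /= small] := cvgr_lt _ (cvg_expr LK1) _ (divr_gt0 B0 g00).
have KN0 : 0 < K ^+ N := exprn_gt0 N K0.
have LN0 : 0 < L ^+ N := exprn_gt0 N L0.
have lowerN : B <= g N * L ^+ N by rewrite -ler_pdivrMr // lower.
have : B * K ^+ N <= g 0 * L ^+ N.
  apply: le_trans (ler_wpM2r (ltW LN0) (decay N)).
  by rewrite -mulrA [B * _]mulrC ler_pM2l.
move: small; rewrite expr_div_n ltr_pdivrMr // mulrAC ltr_pdivlMr // mulrC.
lra.
Qed.

Section Balls.
Variables (R : realType) (X : Type) (d : X -> X -> R).
Local Notation ball := (cball d).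

Lemma ball_sub x r r' : r <= r' -> ball x r `<=` ball x r'.
Proof. by move=> rr' y; rewrite /cball /= => /le_trans; apply. Qed.

Lemma eratio_fin (a b : R) : eratio a%:E b%:E = (a / b)%:E.
Proof. by rewrite /eratio EFinM. Qed.

Lemma eratio_le (a a' b : \bar R) :
  (0 <= b)%E -> (a <= a')%E -> (eratio a b <= eratio a' b)%E.
Proof.
case: b => [r| |] //= r0 aa.
  by apply: lee_wpmul2r => //; rewrite lee_fin invr_ge0 -lee_fin.
by move: aa; case: a => [s| |]; case: a' => [s'| |].
Qed.

Definition ratio_le_at_small_scales (m : set X -> \bar R) (c K : R) (x : X) : Prop :=
  forall Rr, 0 < Rr -> exists2 r, 0 < r <= Rr &
    (eratio (m (ball x (c * r))) (m (ball x r)) <= K%:E)%E.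

Lemma ratio_le_at_small_scales_mono (m : {outer_measure set X -> \bar R}) c c' K x :
  c <= c' -> ratio_le_at_small_scales m c' K x -> ratio_le_at_small_scales m c K x.
Proof.
move=> cc' bound Rr Rr0; have [r /andP[r0 rRr] le_K] := bound Rr Rr0.
exists r; first by rewrite r0.
apply: le_trans le_K; apply: eratio_le; first exact: outer_measure_ge0.
by apply: le_outer_measure; apply: ball_sub; rewrite ler_pM2r.
Qed.

(* A uniform small-scale bound on supp m bounds [lowerC m c]: every value of
   R |-> wad_aux m c R is at most K, hence so is its limit at 0+ (when the
   limit does not exist, [lim] defaults to 0, whence 0 <= K). *)
Lemma lowerC_le_of_ratio_bound (m : set X -> \bar R) c K :
  0 <= K -> (forall x, supp d m x -> ratio_le_at_small_scales m c K x) ->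
  (lowerC d m c <= K%:E)%E.
Proof.
move=> K0 bound.
have wad_le Rr : 0 < Rr -> (wad_aux d m c Rr <= K%:E)%E.
  move=> Rr0; apply: ge_ereal_sup => _ [x sx <-].
  have [r r0 le_K] := bound x sx Rr Rr0.
  by apply: le_trans le_K; apply: ereal_inf_lbound; exists r.
rewrite /lowerC; have [cv|ncv] := pselect (cvg (wad_aux d m c Rr @[Rr --> 0^'+])).
  by apply: lime_le => //; near=> Rr; apply: wad_le; near: Rr; exact: nbhs_right_gt.
by rewrite dvgP.
Unshelve. all: by end_near.
Qed.

Lemma noncollapsed_lower_bound (mu m : set X -> \bar R) x :
  weakly_noncollapsed d mu m -> supp d m x ->
  exists2 a : R, 0 < a & exists2 del : R, 0 < del &
    forall r, 0 < r < del -> (a%:E < eratio (m (ball x r)) (mu (ball x r)))%E.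
Proof.
rewrite /weakly_noncollapsed; set I := ereal_inf _ => I0 sx.
have [a a0 aI] : exists2 a : R, 0 < a & (a%:E < I)%E.
  move: I0; case: I => [r| |] //; last by exists 1; rewrite ?ltry.
  by rewrite lte_fin => r0; exists (r / 2); rewrite ?divr_gt0 // lte_fin; lra.
have : (I <= liminf0 (fun r => eratio (m (ball x r)) (mu (ball x r))))%E.
  by apply: ereal_inf_lbound; exists x.
move=> /(lt_le_trans aI) /ereal_sup_gt [_ [del del0 <-]] a_inf.
exists a => //; exists del => // r rdel.
by apply: (lt_le_trans a_inf); apply: ereal_inf_lbound; exists r.
Qed.

Section MuBalls.
Variable mu : {outer_measure set X -> \bar R}.
Hypothesis mu_ball : forall x r, 0 < r -> (0 < mu (ball x r))%E /\ (mu (ball x r) < +oo)%E.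

Lemma mu_ballE x r : 0 < r -> mu (ball x r) = (fine (mu (ball x r)))%:E.
Proof.
by move=> r0; have [h0 hoo] := mu_ball x r0; rewrite fineK // ge0_fin_numE ?(ltW h0).
Qed.

Lemma mu_ball_gt0 x r : 0 < r -> 0 < fine (mu (ball x r)).
Proof. by move=> r0; have [h0 hoo] := mu_ball x r0; apply: fine_gt0; rewrite h0 hoo. Qed.

Lemma mu_ball_le x r r' : 0 < r -> r <= r' ->
  fine (mu (ball x r)) <= fine (mu (ball x r')).
Proof.
move=> r0 rr'; have r'0 := lt_le_trans r0 rr'.
by rewrite -lee_fin -!mu_ballE //; apply: le_outer_measure; apply: ball_sub.
Qed.

Definition geometric_volume_decay (x : X) (c L A r1 : R) : Prop :=
  forall n r, 0 < r -> r <= r1 ->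
    A / L ^+ n * fine (mu (ball x r)) <= fine (mu (ball x (r / c ^+ n))).

Lemma ratio_bound_of_geometric_decay (m : {outer_measure set X -> \bar R})
    x c L K A r1 :
  locally_finite d m -> weakly_noncollapsed d mu m -> supp d m x ->
  1 < c -> 0 < L -> L < K -> 0 < A -> 0 < r1 ->
  geometric_volume_decay x c L A r1 -> ratio_le_at_small_scales m c K x.
Proof.
move=> m_lf wnc sx c1 L0 LK A0 r10 decay Rr Rr0.
have [a a0 [del del0 noncollapsed]] := noncollapsed_lower_bound wnc sx.
have [rho rho0 m_fin] := m_lf x.
pose r0 := Num.min (Num.min Rr r1) (Num.min (del / 2) rho).
have r00 : 0 < r0 by rewrite !lt_min Rr0 r10 rho0 divr_gt0.
have r0_le : [/\ r0 <= Rr, r0 <= r1, r0 < del & r0 <= rho].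
  split; rewrite ?ge_min ?lexx ?orbT //.
  by apply: (le_lt_trans (y := del / 2)); [rewrite !ge_min lexx !orbT | lra].
have [r0Rr r0r1 r0del r0rho] := r0_le.
have c0 : 0 < c by lra.
pose s n := r0 / c ^+ n.
have s0 n : 0 < s n by rewrite divr_gt0 // exprn_gt0.
have s_le n : s n <= r0.
  by rewrite ler_pdivrMr ?exprn_gt0 // ler_peMr ?(ltW r00) // exprn_ege1 // ltW.
have sS n : c * s n.+1 = s n.
  by rewrite /s exprS invfM mulrCA mulVKf ?gt_eqF.
pose g n := fine (m (ball x (s n))).
have gE n : m (ball x (s n)) = (g n)%:E.
  rewrite fineK // ge0_fin_numE ?outer_measure_ge0 //.
  by apply: le_lt_trans m_fin; apply: le_outer_measure; apply: ball_sub; apply: le_trans r0rho.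
have g0 n : 0 < g n by rewrite -lte_fin -gE; apply: sx.
have [[n small]|large] := pselect (exists n,
    (eratio (m (ball x (c * s n.+1))) (m (ball x (s n.+1))) <= K%:E)%E).
  by exists (s n.+1) => //; rewrite s0 (le_trans (s_le _)).
exfalso; pose M := fine (mu (ball x r0)).
apply: (@geometric_squeeze _ L K (a * A * M) g L0 LK).
- by rewrite !mulr_gt0 ?mu_ball_gt0.
- move=> n; have /noncollapsed : 0 < s n < del by rewrite s0 (le_lt_trans (s_le n)).
  rewrite gE mu_ballE // eratio_fin lte_fin ltr_pdivlMr ?mu_ball_gt0 // => /(le_lt_trans _)/ltW.
  apply; rewrite -!mulrA ler_pM2l // mulrA mulrAC.
  exact: decay n r0 r00 r0r1.
- move=> n; apply: ltW; rewrite ltNge; apply/negP => le_K.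
  by apply: large; exists n; rewrite sS !gE eratio_fin lee_fin ler_pdivrMr.
Qed.

Lemma lower_decay_geometric Q x c : rel_lower_volume_decay d mu Q 1 -> 1 < c ->
  exists2 A, 0 < A & geometric_volume_decay x c (c `^ Q) A (2^-1).
Proof.
move=> [_ [C C0 decayQ]] c1; exists C^-1; first by rewrite invr_gt0.
move=> n r r0 r_half; have c0 : 0 < c by lra.
have cn0 : 0 < c ^+ n := exprn_gt0 n c0.
have rn0 : 0 < r / c ^+ n by rewrite divr_gt0.
have r1 : r < 1 by lra.
have sub : ball x (r / c ^+ n) `<=` ball x r.
  by apply: ball_sub; rewrite ler_pdivrMr // ler_peMr ?(ltW r0) // exprn_ege1 // ltW.
have := decayQ x x _ _ rn0 r0 r1 sub.
have -> : (r / c ^+ n / r) `^ Q = (c `^ Q ^+ n)^-1.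
  rewrite mulrAC divff ?gt_eqF // mul1r.
  by rewrite -(powR_invn _ (ltW c0)) -powRrM mulrC powRrM powR_invn // powR_ge0.
set p := fine (mu (ball x (r / c ^+ n))); set q := fine (mu (ball x r)) => le_pq.
have q0 : 0 < q := mu_ball_gt0 x r0.
apply: (le_trans (y := C^-1 * (C * (p / q)) * q)).
  by rewrite ler_wpM2r ?(ltW q0) // ler_wpM2l // invr_ge0 ltW.
by rewrite mulKf ?gt_eqF // divfK ?gt_eqF.
Qed.

Lemma doubling_bound : unif_loc_doubling d mu ->
  exists2 C : R, 0 < C & forall x s, 0 < s -> s <= 1 ->
    fine (mu (ball x (2 * s))) <= C * fine (mu (ball x s)).
Proof.
move=> dbl; have [C doubling] := dbl 1 ltr01.
exists (Num.max C 1); first by rewrite lt_max ltr01 orbT.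
move=> x s s0 s1; have s20 : 0 < 2 * s by rewrite mulr_gt0.
have := doubling s x s0 s1.
rewrite (mu_ballE _ s20) (mu_ballE _ s0) eratio_fin lee_fin ler_pdivrMr ?mu_ball_gt0 //.
move/le_trans; apply; apply: ler_wpM2r; first exact: ltW (mu_ball_gt0 _ s0).
by rewrite le_max lexx.
Qed.

Lemma doubling_iterate (C : R) x : 0 <= C ->
  (forall s, 0 < s -> s <= 1 -> fine (mu (ball x (2 * s))) <= C * fine (mu (ball x s))) ->
  forall j s, 0 < s -> s <= 1 ->
    fine (mu (ball x s)) <= C ^+ j * fine (mu (ball x (s / 2 ^+ j))).
Proof.
move=> C0 doubling; elim=> [|j IH] s s0 s1; first by rewrite expr0 mul1r divr1.
apply: le_trans (IH s s0 s1) _.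
have -> : s / 2 ^+ j = 2 * (s / 2 ^+ j.+1) by rewrite exprS invfM mulrCA mulVKf.
rewrite [C ^+ j.+1]exprSr -mulrA; apply: ler_wpM2l; first exact: exprn_ge0.
apply: doubling; first by rewrite divr_gt0 // exprn_gt0.
rewrite ler_pdivrMr ?exprn_gt0 // mul1r (le_trans s1) //.
by apply: exprn_ege1; rewrite ler1n.
Qed.

Lemma doubling_geometric_decay (C c : R) x k : 0 < C -> 0 < c -> c <= 2 ^+ k ->
  (forall s, 0 < s -> s <= 1 -> fine (mu (ball x (2 * s))) <= C * fine (mu (ball x s))) ->
  geometric_volume_decay x c (C ^+ k) 1 1.
Proof.
move=> C0 c0 c2k doubling n r r0 r1.
have Ckn0 : 0 < C ^+ (k * n) := exprn_gt0 _ C0.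
rewrite -exprM mul1r mulrC ler_pdivrMr //.
apply: le_trans (doubling_iterate (ltW C0) doubling (k * n) r0 r1) _.
rewrite mulrC ler_wpM2r ?(ltW Ckn0) //; apply: mu_ball_le.
  by rewrite divr_gt0 // exprn_gt0.
rewrite ler_pdivlMr ?exprn_gt0 // mulrC mulrA ler_pdivrMr ?exprn_gt0 //.
rewrite mulrC ler_wpM2l ?(ltW r0) // exprM.
by apply: lerXn2r; rewrite ?nnegrE ?exprn_ge0 ?(ltW c0).
Qed.

Lemma doubling_ratio_bound (m : {outer_measure set X -> \bar R}) c :
  unif_loc_doubling d mu -> locally_finite d m -> weakly_noncollapsed d mu m ->
  1 < c -> exists2 K : R, 0 <= K &
    forall x, supp d m x -> ratio_le_at_small_scales m c K x.
Proof.
move=> dbl m_lf wnc c1; have c0 : 0 < c by lra.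
have [C C0 doubling] := doubling_bound dbl.
pose k := Num.Def.archi_bound c.
have c2k : c <= 2 ^+ k.
  apply/ltW/(lt_le_trans (archi_boundP (ltW c0))).
  by rewrite -natrX ler_nat ltnW // ltn_expl.
exists (C ^+ k + 1); first by rewrite addr_ge0 // exprn_ge0 // ltW.
move=> x sx; apply: (@ratio_bound_of_geometric_decay m x c (C ^+ k) _ 1 1) => //.
- exact: exprn_gt0.
- by rewrite ltrDl.
- exact: doubling_geometric_decay (doubling x).
Qed.

End MuBalls.
End Balls.

Lemma floor_power_bound (R : realType) (c Q : R) : 1 < c -> 0 < Q ->
  c `^ Q < 2 `^ (((Num.floor c)%:~R + 1) * Q).
Proof.
move=> c1 Q0.
have : (0 <= Num.floor c)%R by rewrite floor_ge0; lra.
move: (floorD1_gt c); case: (Num.floor c) => // k; rewrite intrD natr1 => ck _.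
rewrite powRrM powR_mulrn //; apply: gt0_ltr_powR; rewrite ?nnegrE ?exprn_ge0 ?ltW //; first lra.
by apply: lt_le_trans ck _; rewrite -natrX ler_nat ltnW // ltn_expl.
Qed.

Theorem mainTheorem5 (R : realType) (X : Type) (d : X -> X -> R)
  (mu : {outer_measure set X -> \bar R}) (m : {outer_measure set X -> \bar R}) :
  mm_space d mu ->
  unif_loc_doubling d mu ->
  is_measure_on d m ->
  weakly_noncollapsed d mu m ->
  unif_weak_asymp_doubling d m /\
  (forall (c Q : R), 1 < c -> Qset d mu 1 Q ->
     (lowerC d m c <= (2 `^ (((Num.floor c)%:~R + 1) * Q))%:E)%E).
Proof.
move=> [_ _ mu_ball _] dbl [_ _ m_lf] wnc; split.
  move=> c _; have c2 : 1 < Num.max 2 c by rewrite lt_max ltr1n.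
  have [K K0 bound] := doubling_ratio_bound mu_ball dbl m_lf wnc c2.
  apply: le_lt_trans (ltry K); apply: lowerC_le_of_ratio_bound K0 _ => x sx.
  by apply: ratio_le_at_small_scales_mono (bound x sx); rewrite le_max lexx orbT.
move=> c Q c1 decayQ; apply: lowerC_le_of_ratio_bound (powR_ge0 _ _) _ => x sx.
have [A A0 decay] := lower_decay_geometric mu_ball x decayQ c1.
have cQ0 : 0 < c `^ Q by apply: powR_gt0; lra.
apply: (ratio_bound_of_geometric_decay mu_ball m_lf wnc sx c1 cQ0 _ A0 _ decay).
  exact: floor_power_bound c1 decayQ.1.
by rewrite invr_gt0.
Qed.
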